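(* Let $c=\cos\gamma$, $s=\sin\gamma$ with $\gamma\in(0,2\pi)$, $\gamma\ne\pi/2,\pi,3\pi/2$. Suppose the initial coin state $\nu_0|0\rangle_C+\nu_1|1\rangle_C$ of the generalized alternate quantum walk satisfies \begin{equation*} |\nu_0|^2=|\nu_1|^2,\qquad \nu_0\nu_1^*+\nu_0^*\nu_1=0, \end{equation*} and the initial coin state $q_0|0\rangle_{C'}+q_1|1\rangle_{C'}+q_2|2\rangle_{C'}+q_3|3\rangle_{C'}$ of the generalized Grover walk satisfies \begin{equation*} q_0=q_3=(-1)^\xi\frac{|cs|}{\sqrt{2}\,s},\qquad q_1=q_2=-(-1)^\xi\frac{s}{\sqrt{2}}, \end{equation*} with $\xi\in\{0,1\}$, and the walker starts at the origin $(0,0)$ in both walks. Then the generalized alternate quantum walk and the generalized Grover walk have the same spatial probability distribution (probability of the walker being at $(x,y)$, obtained by tracing out the coin) at every time $t$.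
   Context: Walker space is spanned by $\{|x,y\rangle\}$, $x,y\in\mathbb{Z}$. Generalized Grover walk: four-dimensional coin with basis $|0\rangle_{C'},|1\rangle_{C'},|2\rangle_{C'},|3\rangle_{C'}$ corresponding to moves left-down, left-up, right-down, right-up, i.e. $(x,y)\to(x-1,y-1),(x-1,y+1),(x+1,y-1),(x+1,y+1)$; one time step consists of applying the coin operation \begin{equation*} \hat{A}=\begin{pmatrix} -c^2&|cs|&|cs|&s^2\\ |cs|&-s^2&c^2&|cs|\\ |cs|&c^2&-s^2&|cs|\\ s^2&|cs|&|cs|&-c^2 \end{pmatrix} \end{equation*} followed by the conditional move. Generalized alternate quantum walk: two-dimensional coin with basis $|0\rangle_C,|1\rangle_C$, coin operation $\hat{U}=\begin{pmatrix}c&s\\ s&-c\end{pmatrix}$, and conditional shifts $\hat{S}_x=\sum_{i,j}|i-1,j,0\rangle\langle i,j,0|+\sum_{i,j}|i+1,j,1\rangle\langle i,j,1|$ and $\hat{S}_y=\sum_{i,j}|i,j-1,0\rangle\langle i,j,0|+\sum_{i,j}|i,j+1,1\rangle\langle i,j,1|$; one time step consists of $\hat{U}$, then $\hat{S}_x$, then $\hat{U}$, then $\hat{S}_y$. For $\gamma=\pi/4$ these reduce (up to conventions) to the Hadamard coin and the standard Grover coin. *)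

From mathcomp Require Import all_boot all_order all_algebra.
From mathcomp Require Import complex.
From mathcomp Require Import reals trigo.
Set Implicit Arguments. Unset Strict Implicit. Unset Printing Implicit Defensive.
Import Order.TTheory GRing.Theory Num.Theory.
Local Open Scope ring_scope.
Local Open Scope complex_scope.

Section Walks.
Variable R : realType.
Notation C := (complex R).

Definition state (k : nat) := int -> int -> 'I_k -> C.

Definition rc (r : R) : C := r%:C.

Definition Ucoin (g : R) (i j : 'I_2) : C :=
  let c := cos g in let s := sin g in
  rc (match nat_of_ord i, nat_of_ord j with
      | O, O => c | O, _ => s | _, O => s | _, _ => - c end).

Definition apply_coin k (M : 'I_k -> 'I_k -> C) (psi : state k) : state k :=
  fun x y i => \sum_(j < k) M i j * psi x y j.

(* S_x : |x,y,0> -> |x-1,y,0>, |x,y,1> -> |x+1,y,1> *)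
Definition shiftX (psi : state 2) : state 2 :=
  fun x y i => if val i == 0%N then psi (x + 1) y i else psi (x - 1) y i.
(* S_y : |x,y,0> -> |x,y-1,0>, |x,y,1> -> |x,y+1,1> *)
Definition shiftY (psi : state 2) : state 2 :=
  fun x y i => if val i == 0%N then psi x (y + 1) i else psi x (y - 1) i.

Definition alt_step (g : R) (psi : state 2) : state 2 :=
  shiftY (apply_coin (Ucoin g) (shiftX (apply_coin (Ucoin g) psi))).

Definition Acoin (g : R) (i j : 'I_4) : C :=
  let c := cos g in let s := sin g in let cs := `|c * s| in
  rc (match nat_of_ord i, nat_of_ord j with
      | O, O => - c ^+ 2 | O, S O => cs | O, S (S O) => cs | O, _ => s ^+ 2
      | S O, O => cs | S O, S O => - s ^+ 2 | S O, S (S O) => c ^+ 2 | S O, _ => cs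
      | S (S O), O => cs | S (S O), S O => c ^+ 2 | S (S O), S (S O) => - s ^+ 2
      | S (S O), _ => cs
      | _, O => s ^+ 2 | _, S O => cs | _, S (S O) => cs | _, _ => - c ^+ 2 end).

(* conditional move: coin 0 : (x,y)->(x-1,y-1), 1 : (x-1,y+1),
   2 : (x+1,y-1), 3 : (x+1,y+1) *)
Definition grover_shift (psi : state 4) : state 4 :=
  fun x y i => match nat_of_ord i with
               | O => psi (x + 1) (y + 1) i
               | S O => psi (x + 1) (y - 1) i
               | S (S O) => psi (x - 1) (y + 1) i
               | _ => psi (x - 1) (y - 1) i end.

Definition grover_step (g : R) (psi : state 4) : state 4 :=
  grover_shift (apply_coin (Acoin g) psi).

Definition init_state k (a : 'I_k -> C) : state k :=
  fun x y i => if (x == 0) && (y == 0) then a i else 0.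

Definition prob k (psi : state k) (x y : int) : C :=
  \sum_(i < k) `|psi x y i| ^+ 2.

End Walks.

From mathcomp Require Import all_boot all_order all_algebra.
From mathcomp Require Import complex.
From mathcomp Require Import reals trigo.
From mathcomp Require Import ring lra.
From Stdlib Require Import FunctionalExtensionality.
Import Order.TTheory GRing.Theory Num.Theory.
Local Open Scope complex_scope.
Local Open Scope ring_scope.
Set Implicit Arguments. Unset Strict Implicit. Unset Printing Implicit Defensive.

(* Let σ = ±1 be the sign of cs, so that |cs| = σcs.  The Grover step exchanges
   the linear form [hform]
     H p (x,y) = s p_ld(x-1,y) + σc p_lu(x-1,y) + σc p_rd(x+1,y) + s p_ru(x+1,y)
   with its vertical analogue [vform]; the prescribed q = (c, -σs, -σs, c)/k,
   k = √2 (-1)^ξ σ, kills both at time 0, hence at every time.  On Grover states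
   with H = 0 the coin map [alt_of_grover]
     Z p = (b0 p_ld - σ b1 p_rd, - σ b0 p_lu - b1 p_ru)
   satisfies  alternate step ∘ Z = - Z ∘ Grover step.  As the alternate coin U is
   an involution, Z maps the initial Grover state to the initial alternate state
   for b = k U ν.  The conditions on ν say that ν is circularly polarised, which
   the reflection U preserves, so |b0| = |b1| = 1 and b0 b1^* is imaginary; since
   the Grover walk stays real, Z then preserves the spatial distribution. *)

Definition ld : 'I_4 := @Ordinal 4 0 isT.
Definition lu : 'I_4 := @Ordinal 4 1 isT.
Definition rd : 'I_4 := @Ordinal 4 2 isT.
Definition ru : 'I_4 := @Ordinal 4 3 isT.

Lemma big_ord4 (V : nmodType) (f : 'I_4 -> V) :
  \sum_(i < 4) f i = f ld + f lu + f rd + f ru.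
Proof.
rewrite !big_ord_recl big_ord0 addr0 !addrA.
by congr (_ + _ + _ + _); congr f; apply: val_inj.
Qed.

Lemma big_ord2 (V : nmodType) (f : 'I_2 -> V) :
  \sum_(i < 2) f i = f ord0 + f (lift ord0 ord0).
Proof. by rewrite !big_ord_recl big_ord0 addr0. Qed.

Lemma ord2P (i : 'I_2) : i = ord0 \/ i = lift ord0 ord0.
Proof. by case: i => [[|[|//]] ?]; [left | right]; apply: val_inj. Qed.

Section ComplexConj.
Variable R : realType.
Local Notation C := (complex R).

Lemma conjC_real_complex (a : R) : (a%:C)^* = a%:C :> C.
Proof. exact: conjc_real. Qed.

(* Folds back the bundled morphism that [rmorphM] and friends leave behind. *)
Lemma rmorph_conjE (z : C) : (Num.conj : {rmorphism C -> C}) z = z^*.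
Proof. by []. Qed.

Definition conj_state k (p : state R k) : state R k := fun x y i => (p x y i)^*.

Lemma conj_apply_coin k (M : 'I_k -> 'I_k -> C) (p : state R k) :
  (forall i j, (M i j)^* = M i j) ->
  conj_state (apply_coin M p) = apply_coin M (conj_state p).
Proof.
move=> M_real; do 3 apply: functional_extensionality => ?.
rewrite /conj_state /apply_coin rmorph_sum; apply: eq_bigr => j _.
by rewrite rmorphM rmorph_conjE M_real.
Qed.

Lemma conj_grover_shift (p : state R 4) :
  conj_state (grover_shift p) = grover_shift (conj_state p).
Proof.
do 3 apply: functional_extensionality => ?.
by rewrite /conj_state /grover_shift; case: nat_of_ord => [|[|[|]]].
Qed.

Lemma conj_grover_step (g : R) (p : state R 4) :
  conj_state (grover_step g p) = grover_step g (conj_state p).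
Proof.
rewrite /grover_step conj_grover_shift conj_apply_coin // => i j.
exact: conjC_real_complex.
Qed.

Lemma conj_iter_grover_step (g : R) (p : state R 4) t :
  conj_state p = p -> conj_state (iter t (grover_step g) p) = iter t (grover_step g) p.
Proof. by move=> p_real; elim: t => //= t IH; rewrite conj_grover_step IH. Qed.

(* [n] is circularly polarised: equal weights and relative phase ±i. *)
Definition circular (n0 n1 : C) := n0 * n0^* = n1 * n1^* /\ n0 * n1^* + n0^* * n1 = 0.

Lemma circularZ (k n0 n1 : C) : circular n0 n1 -> circular (k * n0) (k * n1).
Proof.
move=> [n_eq n_re]; split; rewrite !rmorphM !rmorph_conjE.
- by rewrite mulrACA n_eq -mulrACA.
- by rewrite -(mulr0 (k * k^*)) -n_re; ring.
Qed.

Lemma normC_real_sqr (z : C) : z^* = z -> `|z| ^+ 2 = z ^+ 2.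
Proof. by move=> zR; rewrite normCK zR expr2. Qed.

Lemma circular_normD (b0 b1 P Q : C) :
  b0 * b0^* = 1 -> circular b0 b1 -> P^* = P -> Q^* = Q ->
  `|b0 * P + b1 * Q| ^+ 2 = P ^+ 2 + Q ^+ 2.
Proof.
move=> b01 [b_eq b_re] PR QR.
rewrite normCK rmorphD !rmorphM !rmorph_conjE PR QR.
transitivity (b0 * b0^* * P ^+ 2 + b1 * b1^* * Q ^+ 2
              + (b0 * b1^* + b0^* * b1) * (P * Q)); first by ring.
by rewrite -b_eq b01 b_re; ring.
Qed.

Section Reflection.
Variables (c s : R) (n0 n1 : C).
Hypothesis cs1 : c ^+ 2 + s ^+ 2 = 1.
Hypothesis n_circular : circular n0 n1.

Let cs1C : c%:C ^+ 2 = 1 - s%:C ^+ 2 :> C.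
Proof. by rewrite -!rmorphXn -rmorphB -cs1 addrK. Qed.

Lemma reflect_norm : (c%:C * n0 + s%:C * n1) * (c%:C * n0 + s%:C * n1)^* = n0 * n0^*.
Proof.
have [n_eq n_re] := n_circular.
have n1E : n1 * n1^* = n0 * n0^* by [].
have n_reE : n0 * n1^* = - (n0^* * n1) by apply/eqP; rewrite -subr_eq0 opprK n_re.
rewrite !(rmorphD, rmorphM) !rmorph_conjE !conjC_real_complex.
ring: cs1C n1E n_reE.
Qed.

Lemma circular_reflect : circular (c%:C * n0 + s%:C * n1) (s%:C * n0 - c%:C * n1).
Proof.
have [n_eq n_re] := n_circular.
have n1E : n1 * n1^* = n0 * n0^* by [].
have n_reE : n0 * n1^* = - (n0^* * n1) by apply/eqP; rewrite -subr_eq0 opprK n_re.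
split; rewrite !(rmorphD, rmorphB, rmorphN, rmorphM) !rmorph_conjE !conjC_real_complex;
  ring: cs1C n1E n_reE.
Qed.

End Reflection.
End ComplexConj.

Section Walks.
Variables (R : realType) (g : R).
Local Notation C := (complex R).
Local Notation cg := (cos g)%:C.
Local Notation sg := (sin g)%:C.
Local Notation sgn := ((-1) ^+ (cos g * sin g < 0)%R : C).

Let sgn2 : sgn ^+ 2 = 1.
Proof. exact: sqrr_sign. Qed.

Let cg2 : cg ^+ 2 = 1 - sg ^+ 2.
Proof. by rewrite -!rmorphXn -rmorphB cos2sin2. Qed.

Let normcsC : rc `|cos g * sin g| = sgn * cg * sg.
Proof. by rewrite /rc normrEsign !rmorphM rmorph_sign mulrA. Qed.

Lemma grover_step_ld (p : state R 4) x y :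
  grover_step g p x y ld =
  - cg ^+ 2 * p (x + 1) (y + 1) ld + sgn * cg * sg * p (x + 1) (y + 1) lu
  + sgn * cg * sg * p (x + 1) (y + 1) rd + sg ^+ 2 * p (x + 1) (y + 1) ru.
Proof.
rewrite /grover_step /grover_shift /= /apply_coin big_ord4 /Acoin /=.
by rewrite normcsC /rc !rmorphN !rmorphXn.
Qed.

Lemma grover_step_lu (p : state R 4) x y :
  grover_step g p x y lu =
  sgn * cg * sg * p (x + 1) (y - 1) ld - sg ^+ 2 * p (x + 1) (y - 1) lu
  + cg ^+ 2 * p (x + 1) (y - 1) rd + sgn * cg * sg * p (x + 1) (y - 1) ru.
Proof.
rewrite /grover_step /grover_shift /= /apply_coin big_ord4 /Acoin /=.
by rewrite normcsC /rc !rmorphN !rmorphXn mulNr.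
Qed.

Lemma grover_step_rd (p : state R 4) x y :
  grover_step g p x y rd =
  sgn * cg * sg * p (x - 1) (y + 1) ld + cg ^+ 2 * p (x - 1) (y + 1) lu
  - sg ^+ 2 * p (x - 1) (y + 1) rd + sgn * cg * sg * p (x - 1) (y + 1) ru.
Proof.
rewrite /grover_step /grover_shift /= /apply_coin big_ord4 /Acoin /=.
by rewrite normcsC /rc !rmorphN !rmorphXn mulNr.
Qed.

Lemma grover_step_ru (p : state R 4) x y :
  grover_step g p x y ru =
  sg ^+ 2 * p (x - 1) (y - 1) ld + sgn * cg * sg * p (x - 1) (y - 1) lu
  + sgn * cg * sg * p (x - 1) (y - 1) rd - cg ^+ 2 * p (x - 1) (y - 1) ru.
Proof.
rewrite /grover_step /grover_shift /= /apply_coin big_ord4 /Acoin /=.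
by rewrite normcsC /rc !rmorphN !rmorphXn mulNr.
Qed.

Lemma alt_step0 (p : state R 2) x y :
  alt_step g p x y ord0 =
  cg * (cg * p (x + 1) (y + 1) ord0 + sg * p (x + 1) (y + 1) (lift ord0 ord0))
  + sg * (sg * p (x - 1) (y + 1) ord0 - cg * p (x - 1) (y + 1) (lift ord0 ord0)).
Proof.
rewrite /alt_step /shiftY /= /apply_coin big_ord2 /shiftX /= !big_ord2 /Ucoin /=.
by rewrite /rc !rmorphN mulNr.
Qed.

Lemma alt_step1 (p : state R 2) x y :
  alt_step g p x y (lift ord0 ord0) =
  sg * (cg * p (x + 1) (y - 1) ord0 + sg * p (x + 1) (y - 1) (lift ord0 ord0))
  - cg * (sg * p (x - 1) (y - 1) ord0 - cg * p (x - 1) (y - 1) (lift ord0 ord0)).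
Proof.
rewrite /alt_step /shiftY /= /apply_coin big_ord2 /shiftX /= !big_ord2 /Ucoin /=.
by rewrite /rc !rmorphN !mulNr.
Qed.

Definition hform (p : state R 4) x y : C :=
  sg * p (x - 1) y ld + sgn * cg * p (x - 1) y lu
  + sgn * cg * p (x + 1) y rd + sg * p (x + 1) y ru.

Definition vform (p : state R 4) x y : C :=
  sg * p x (y - 1) ld + sgn * cg * p x (y - 1) rd
  + sgn * cg * p x (y + 1) lu + sg * p x (y + 1) ru.

Lemma vform_grover_step (p : state R 4) x y : vform (grover_step g p) x y = hform p x y.
Proof.
rewrite /vform /hform grover_step_ld grover_step_lu grover_step_rd grover_step_ru.
rewrite !subrK !addrK; ring: cg2 sgn2.
Qed.

Lemma hform_grover_step (p : state R 4) x y : hform (grover_step g p) x y = vform p x y.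
Proof.
rewrite /vform /hform grover_step_ld grover_step_lu grover_step_rd grover_step_ru.
rewrite !subrK !addrK; ring: cg2 sgn2.
Qed.

Lemma forms_iter_grover_step (p : state R 4) :
  (forall x y, hform p x y = 0) -> (forall x y, vform p x y = 0) ->
  forall t x y, hform (iter t (grover_step g) p) x y = 0 /\
                vform (iter t (grover_step g) p) x y = 0.
Proof.
move=> hp vp; elim=> [|t IH] x y /=; first by [].
by rewrite hform_grover_step vform_grover_step; case: (IH x y).
Qed.

Definition alt_of_grover (b0 b1 e : C) (p : state R 4) : state R 2 :=
  fun x y i => if val i == 0%N then e * (b0 * p x y ld - sgn * b1 * p x y rd)
               else e * (- sgn * b0 * p x y lu - b1 * p x y ru).

Lemma alt_step_alt_of_grover (b0 b1 e : C) (p : state R 4) :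
  (forall x y, hform p x y = 0) ->
  alt_step g (alt_of_grover b0 b1 e p) = alt_of_grover b0 b1 (- e) (grover_step g p).
Proof.
move=> hp; apply: functional_extensionality => x.
apply: functional_extensionality => y; apply: functional_extensionality => i.
case: (ord2P i) => ->.
- rewrite alt_step0 /alt_of_grover /= grover_step_ld grover_step_rd.
  apply/eqP; rewrite -subr_eq0 -(mulr0 (e * (b0 * sg - b1 * cg))) -(hp x (y + 1)).
  by apply/eqP; rewrite /hform; ring: sgn2.
- rewrite alt_step1 /alt_of_grover /= grover_step_lu grover_step_ru.
  apply/eqP; rewrite -subr_eq0 -(mulr0 (- e * (b0 * cg + b1 * sg))) -(hp x (y - 1)).
  by apply/eqP; rewrite /hform; ring: sgn2.
Qed.

Lemma iter_alt_step_alt_of_grover (b0 b1 : C) (p : state R 2) (P : state R 4) :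
  p = alt_of_grover b0 b1 1 P ->
  (forall t x y, hform (iter t (grover_step g) P) x y = 0) ->
  forall t, iter t (alt_step g) p =
            alt_of_grover b0 b1 ((-1) ^+ t) (iter t (grover_step g) P).
Proof.
move=> -> hP; elim=> [|t IH] /=; first by rewrite expr0.
by rewrite IH alt_step_alt_of_grover // exprS mulN1r.
Qed.

Lemma prob_alt_of_grover (b0 b1 e : C) (p : state R 4) x y :
  `|e| = 1 -> b0 * b0^* = 1 -> circular b0 b1 -> conj_state p = p ->
  prob (alt_of_grover b0 b1 e p) x y = prob p x y.
Proof.
move=> e1 b01 b_circ p_real.
have pE i : (p x y i)^* = p x y i by rewrite -[in RHS]p_real.
have sgnpE i : (- sgn * p x y i)^* = - sgn * p x y i.
  by rewrite !(rmorphM, rmorphN) rmorph_sign !rmorph_conjE pE.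
have sgnp2 i : (- sgn * p x y i) ^+ 2 = p x y i ^+ 2.
  by rewrite exprMn sqrrN sgn2 mul1r.
rewrite /prob big_ord2 big_ord4 /alt_of_grover /= !normrM e1 !mul1r.
have -> : b0 * p x y ld - sgn * b1 * p x y rd =
          b0 * p x y ld + b1 * (- sgn * p x y rd) by ring.
have -> : - sgn * b0 * p x y lu - b1 * p x y ru =
          b0 * (- sgn * p x y lu) + b1 * (- p x y ru) by ring.
have pNE i : (- p x y i)^* = - p x y i by rewrite rmorphN rmorph_conjE pE.
rewrite !circular_normD // sqrrN !sgnp2 !normC_real_sqr //; ring.
Qed.

Definition grover_init_coin (k : R) : 'I_4 -> C := fun i =>
  ((if (val i == 0%N) || (val i == 3%N) then cos g
    else - ((-1) ^+ (cos g * sin g < 0)%R * sin g)) / k)%:C.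

Lemma hform_init_grover_coin (k : R) x y :
  hform (init_state (grover_init_coin k)) x y = 0.
Proof.
rewrite /hform /init_state /grover_init_coin /=.
case: ((x - 1 == 0) && (y == 0)); case: ((x + 1 == 0) && (y == 0));
  rewrite ?mulr0 ?addr0 // !(rmorphM, rmorphN, fmorphV) rmorph_sign; ring: sgn2.
Qed.

Lemma vform_init_grover_coin (k : R) x y :
  vform (init_state (grover_init_coin k)) x y = 0.
Proof.
rewrite /vform /init_state /grover_init_coin /=.
case: ((x == 0) && (y - 1 == 0)); case: ((x == 0) && (y + 1 == 0));
  rewrite ?mulr0 ?addr0 // !(rmorphM, rmorphN, fmorphV) rmorph_sign; ring: sgn2.
Qed.

Lemma conj_init_grover_coin (k : R) :
  conj_state (init_state (grover_init_coin k)) = init_state (grover_init_coin k).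
Proof.
do 3 apply: functional_extensionality => ?.
by rewrite /conj_state /init_state; case: ifP => _; rewrite ?conjC0 ?conjC_real_complex.
Qed.

Lemma init_alt_of_grover (nu : 'I_2 -> C) (k : R) : k != 0 ->
  init_state nu =
  alt_of_grover (k%:C * (cg * nu ord0 + sg * nu (lift ord0 ord0)))
                (k%:C * (sg * nu ord0 - cg * nu (lift ord0 ord0)))
                1 (init_state (grover_init_coin k)).
Proof.
move=> k0; have kC0 : k%:C != 0 :> C by rewrite fmorph_eq0.
apply: functional_extensionality => x; apply: functional_extensionality => y.
apply: functional_extensionality => i.
rewrite /init_state /alt_of_grover /grover_init_coin; case: (ord2P i) => -> /=;
  case: ifP => _; rewrite ?(mulr0, subr0, oppr0) //;
  rewrite !(rmorphM, rmorphN, fmorphV) rmorph_sign; by field: sgn2 cg2.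
Qed.

Lemma grover_init_coinE (xi : bool) (q : 'I_4 -> C) : sin g != 0 ->
  (forall i : 'I_4, (val i == 0%N) || (val i == 3%N) ->
     q i = ((-1) ^+ xi * `|cos g * sin g| / (Num.sqrt 2 * sin g))%:C) ->
  (forall i : 'I_4, (val i == 1%N) || (val i == 2%N) ->
     q i = (- ((-1) ^+ xi * sin g / Num.sqrt 2))%:C) ->
  q = grover_init_coin (Num.sqrt 2 * (-1) ^+ xi * (-1) ^+ (cos g * sin g < 0)%R).
Proof.
move=> sin_g0 q03 q12; apply: functional_extensionality => i.
have sqrt2_0 : Num.sqrt 2 != 0 :> R by rewrite gt_eqF // sqrtr_gt0 ltr0n.
have xi2 : ((-1) ^+ xi : R) ^+ 2 = 1 := sqrr_sign _ _.
have sgn2R : ((-1) ^+ (cos g * sin g < 0)%R : R) ^+ 2 = 1 := sqrr_sign _ _.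
rewrite /grover_init_coin; case: ifP => i03.
- rewrite q03 // normrEsign; congr (_%:C).
  by field: xi2 sgn2R; rewrite !signr_eq0 sqrt2_0 ?sin_g0.
- rewrite q12; last by case: i i03 => [[|[|[|[|]]]]].
  congr (_%:C).
  by field: xi2 sgn2R; rewrite !signr_eq0 sqrt2_0 ?sin_g0.
Qed.
End Walks.

Lemma sin_neq0 (R : realType) (g : R) : 0 < g < 2 * pi -> g != pi -> sin g != 0.
Proof.
move=> /andP[g_gt0 g_lt2pi] g_neq_pi; have pi_gt0 := pi_gt0 R.
case: (ltrgtP g pi) => [g_lt_pi | pi_lt_g | g_pi].
- by rewrite gt_eqF // sin_gt0_pi // g_gt0 g_lt_pi.
- rewrite -(subrK pi g) sinDpi oppr_eq0 gt_eqF // sin_gt0_pi //.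
  by apply/andP; split; lra.
- by rewrite g_pi eqxx in g_neq_pi.
Qed.

Theorem theorem2 (R : realType) (g : R) (nu : 'I_2 -> complex R)
    (q : 'I_4 -> complex R) (xi : bool) :
  0 < g < 2 * pi ->
  g != pi / 2 -> g != pi -> g != 3 * pi / 2 ->
  `|nu ord0| ^+ 2 + `|nu (lift ord0 ord0)| ^+ 2 = 1 ->
  `|nu ord0| ^+ 2 = `|nu (lift ord0 ord0)| ^+ 2 ->
  nu ord0 * (nu (lift ord0 ord0))^* + (nu ord0)^* * nu (lift ord0 ord0) = 0 ->
  (forall i : 'I_4, (val i == 0%N) || (val i == 3%N) ->
     q i = ((-1) ^+ xi * `|cos g * sin g| / (Num.sqrt 2 * sin g))%:C) ->
  (forall i : 'I_4, (val i == 1%N) || (val i == 2%N) ->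
     q i = (- ((-1) ^+ xi * sin g / Num.sqrt 2))%:C) ->
  forall (t : nat) (x y : int),
    prob (iter t (alt_step g) (init_state nu)) x y =
    prob (iter t (grover_step g) (init_state q)) x y.
Proof.
move=> g_range _ g_neq_pi _ nu_norm nu_eq nu_re q03 q12 t x y.
rewrite (grover_init_coinE (sin_neq0 g_range g_neq_pi) q03 q12).
set k := Num.sqrt 2 * _ * _.
have k2 : k ^+ 2 = 2.
  by rewrite !exprMn !sqrr_sign !mulr1 sqr_sqrtr ?ler0n.
have k0 : k != 0 by rewrite !mulf_neq0 ?signr_eq0 // sqrtr_eq0 -ltNge ltr0n.
clearbody k.
have nu_circ : circular (nu ord0) (nu (lift ord0 ord0)).
  by split; [rewrite -!normCK | exact: nu_re].
rewrite (iter_alt_step_alt_of_grover (init_alt_of_grover g nu k0)); last first.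
  move=> s x' y'.
  by case: (forms_iter_grover_step (hform_init_grover_coin g k)
                                   (vform_init_grover_coin g k) s x' y').
rewrite prob_alt_of_grover //.
- by rewrite normrX normrN1 expr1n.
- rewrite rmorphM !rmorph_conjE conjC_real_complex mulrACA.
  rewrite (reflect_norm (cos2Dsin2 g) nu_circ) -rmorphM -expr2 k2.
  by rewrite rmorph_nat -normCK mulr_natl mulr2n {2}nu_eq nu_norm.
- exact/circularZ/(circular_reflect (cos2Dsin2 g)).
- exact/conj_iter_grover_step/conj_init_grover_coin.
Qed.
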